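(* For every $n\times r$ basis matrix $P$ and every positive integer $s$, $\delta_s(I-PP')=\kappa_s^2(P)$.
   Context: A basis matrix is a real matrix $P$ with $P'P=I$. For $T\subseteq\{1,\dots,n\}$, $I_T$ is the submatrix of the $n\times n$ identity with columns in $T$, and $\Psi_T:=\Psi I_T$. The $s$-restricted isometry constant $\delta_s(\Psi)$ of an $n\times m$ matrix $\Psi$ is the smallest real number such that $(1-\delta_s)\|x\|_2^2\le\|\Psi_Tx\|_2^2\le(1+\delta_s)\|x\|_2^2$ for all $T$ with $|T|\le s$ and all $x\in\mathbb R^{|T|}$. The denseness coefficient is $\kappa_s(B):=\max_{|T|\le s}\|I_T'\,\mathrm{basis}(B)\|_2$, where $\mathrm{basis}(B)$ is a basis matrix with the same column span as $B$; for a basis matrix $P$, $\kappa_s(P)=\max_{|T|\le s}\|I_T'P\|_2$. *)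

From HB Require Import structures.
From mathcomp Require Import all_boot all_order all_algebra.
From mathcomp Require Import classical_sets reals.
Set Implicit Arguments. Unset Strict Implicit. Unset Printing Implicit Defensive.
Import Order.TTheory GRing.Theory Num.Theory.
Local Open Scope ring_scope.
Local Open Scope classical_set_scope.

Section Defs.
Variable R : realType.

Definition sqnorm (k : nat) (v : 'cV[R]_k) : R := \sum_(i < k) (v i 0) ^+ 2.

Definition vnorm (k : nat) (v : 'cV[R]_k) : R := Num.sqrt (sqnorm v).

Definition opnorm (m k : nat) (A : 'M[R]_(m, k)) : R :=
  sup [set vnorm (A *m x) | x in [set x : 'cV[R]_k | vnorm x <= 1]].

Definition I_T (n : nat) (T : {set 'I_n}) : 'M[R]_(n, #|T|) :=
  \matrix_(i < n, j < #|T|) (i == enum_val j)%:R.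

Definition basis_matrix (n r : nat) (P : 'M[R]_(n, r)) : Prop :=
  P^T *m P = 1%:M.

Definition rip_const (n m s : nat) (Psi : 'M[R]_(n, m)) : R :=
  inf [set d : R | forall T : {set 'I_m}, (#|T| <= s)%N ->
         forall x : 'cV[R]_(#|T|),
           (1 - d) * sqnorm x <= sqnorm ((Psi *m I_T T) *m x) /\
           sqnorm ((Psi *m I_T T) *m x) <= (1 + d) * sqnorm x].

Definition kappa (n r s : nat) (P : 'M[R]_(n, r)) : R :=
  \big[Num.max/0]_(T : {set 'I_n} | (#|T| <= s)%N) opnorm ((I_T T)^T *m P).

End Defs.

From HB Require Import structures.
From mathcomp Require Import all_boot all_order all_algebra.
From mathcomp Require Import classical_sets reals.
From mathcomp Require Import lra.
Set Implicit Arguments. Unset Strict Implicit. Unset Printing Implicit Defensive.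
Import Order.TTheory GRing.Theory Num.Theory.
Local Open Scope ring_scope.
Local Open Scope classical_set_scope.

(* Write Q = I - P P'.  Since P'P = I, Pythagoras gives
   |Q I_T x|^2 = |x|^2 - |P' I_T x|^2, and |P' I_T x| <= |I_T' P| |x| because a
   matrix and its transpose have the same spectral norm.  So d = kappa_s(P)^2
   satisfies both restricted isometry inequalities, the upper one trivially.
   Conversely, the lower inequality for an admissible d says
   |(I_T' P)' x|^2 <= d |x|^2 for every |T| <= s, i.e. kappa_s(P)^2 <= d. *)

Lemma card_set_ord0 (T : {set 'I_0}) : #|T| = 0%N.
Proof. by apply/eqP; rewrite -leqn0 (leq_trans (max_card _)) ?card_ord. Qed.

Section RealInf.
Variable R : realType.

(* [inf] of a set with no lower bound is [0] by convention. *)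
Lemma inf_setT : inf [set: R] = 0.
Proof. by apply: inf_out => -[_ [l l_lb]]; have := l_lb (l - 1) I; lra. Qed.

Lemma inf_attained (S : set R) x : S x -> lbound S x -> inf S = x.
Proof.
move=> Sx x_lb; apply/le_anti/andP; split.
  by apply: ge_inf Sx; exists x.
by apply: lb_le_inf; first by exists x.
Qed.

End RealInf.

Section EuclideanNorm.
Variable R : realType.
Implicit Types (k m : nat).

Definition dotmx k (u v : 'cV[R]_k) : R := (u^T *m v) 0 0.

Lemma sqnormE k (v : 'cV[R]_k) : sqnorm v = dotmx v v.
Proof. by rewrite /sqnorm /dotmx mxE; apply: eq_bigr => i _; rewrite !mxE expr2. Qed.

Lemma sqnorm_ge0 k (v : 'cV[R]_k) : 0 <= sqnorm v.
Proof. by apply: sumr_ge0 => i _; rewrite sqr_ge0. Qed.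

Lemma sqnorm_eq0 k (v : 'cV[R]_k) : (sqnorm v == 0) = (v == 0).
Proof.
apply/idP/eqP => [|->]; last by rewrite /sqnorm big1 // => i _; rewrite mxE expr0n.
rewrite /sqnorm psumr_eq0 => [/allP v0|i _]; last exact: sqr_ge0.
apply/matrixP => i j; rewrite (ord1 j) mxE.
by have := v0 i (mem_index_enum i); rewrite sqrf_eq0 => /eqP.
Qed.

Lemma sqnorm0 k : sqnorm (0 : 'cV[R]_k) = 0.
Proof. by apply/eqP; rewrite sqnorm_eq0. Qed.

Lemma sqnormZ k a (v : 'cV[R]_k) : sqnorm (a *: v) = a ^+ 2 * sqnorm v.
Proof. by rewrite /sqnorm mulr_sumr; apply: eq_bigr => i _; rewrite mxE exprMn. Qed.

Lemma dotmxC k (u v : 'cV[R]_k) : dotmx u v = dotmx v u.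
Proof. by rewrite /dotmx -[in RHS](trmxK u) -(trmx_mul u^T v) [RHS]mxE. Qed.

Lemma dotmxBl k (u v w : 'cV[R]_k) : dotmx (u - v) w = dotmx u w - dotmx v w.
Proof. by rewrite /dotmx linearB /= mulmxBl [LHS]mxE [X in _ + X]mxE. Qed.

Lemma dotmxBr k (u v w : 'cV[R]_k) : dotmx w (u - v) = dotmx w u - dotmx w v.
Proof. by rewrite dotmxC dotmxBl !(dotmxC w). Qed.

Lemma dotmxZl k a (u v : 'cV[R]_k) : dotmx (a *: u) v = a * dotmx u v.
Proof. by rewrite /dotmx linearZ /= -scalemxAl mxE. Qed.

Lemma dotmx_mull m k (A : 'M[R]_(m, k)) (z : 'cV[R]_k) (y : 'cV[R]_m) :
  dotmx (A *m z) y = dotmx z (A^T *m y).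
Proof. by rewrite /dotmx trmx_mul mulmxA. Qed.

Lemma sqnormB k (u v : 'cV[R]_k) :
  sqnorm (u - v) = sqnorm u - 2 * dotmx u v + sqnorm v.
Proof. rewrite !sqnormE dotmxBl !dotmxBr (dotmxC v u); lra. Qed.

Lemma sqnorm_dim0 k (v : 'cV[R]_k) : k = 0%N -> sqnorm v = 0.
Proof. by move=> k0; subst k; rewrite /sqnorm big_ord0. Qed.

Lemma sqnorm_const1 k : sqnorm (const_mx 1 : 'cV[R]_k) = k%:R.
Proof.
rewrite /sqnorm (eq_bigr (fun=> 1)) => [|i _]; last by rewrite mxE expr1n.
by rewrite sumr_const card_ord.
Qed.

Lemma sqnorm_isometry m k (A : 'M[R]_(m, k)) (z : 'cV[R]_k) :
  A^T *m A = 1%:M -> sqnorm (A *m z) = sqnorm z.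
Proof. by move=> AA; rewrite !sqnormE dotmx_mull mulmxA AA mul1mx. Qed.

(* Expanding [0 <= |l A z - y|^2] with [z = A^T y] and [l = 1/c] gives
   [|z|^2 <= c |y|^2]: the adjoint has the same bound as [A]. *)
Lemma sqnorm_trmx_le m k (A : 'M[R]_(m, k)) (c : R) : 0 <= c ->
  (forall z, sqnorm (A *m z) <= c * sqnorm z) ->
  forall y, sqnorm (A^T *m y) <= c * sqnorm y.
Proof.
move=> c0 Ale y; set z := A^T *m y.
have zE : sqnorm z = dotmx (A *m z) y by rewrite dotmx_mull sqnormE.
have [c_eq0|c_neq0] := eqVneq c 0.
  have := Ale z; rewrite c_eq0 mul0r => Az_le0.
  have /eqP Az0 : A *m z == 0 by rewrite -sqnorm_eq0 eq_le Az_le0 sqnorm_ge0.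
  by rewrite zE Az0 /dotmx trmx0 mul0mx mxE mul0r.
have c_gt0 : 0 < c by rewrite lt0r c_neq0.
have := sqnorm_ge0 (c^-1 *: (A *m z) - y).
rewrite sqnormB sqnormZ dotmxZl -zE => expand_ge0.
have cV_gt0 : 0 < c^-1 by rewrite invr_gt0.
have scaled : c^-1 ^+ 2 * sqnorm (A *m z) <= c^-1 * sqnorm z.
  rewrite expr2 -mulrA ler_pM2l // -(ler_pM2l c_gt0) mulrA mulfV // mul1r.
  exact: Ale.
have : c^-1 * sqnorm z <= sqnorm y by lra.
by rewrite ler_pdivrMl.
Qed.

Lemma vnorm_ge0 k (v : 'cV[R]_k) : 0 <= vnorm v.
Proof. exact: sqrtr_ge0. Qed.

Lemma vnorm_le1 k (v : 'cV[R]_k) : (vnorm v <= 1) = (sqnorm v <= 1).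
Proof. by rewrite /vnorm -{1}sqrtr1 ler_sqrt. Qed.

Lemma sqr_vnorm k (v : 'cV[R]_k) : vnorm v ^+ 2 = sqnorm v.
Proof. by rewrite sqr_sqrtr // sqnorm_ge0. Qed.

End EuclideanNorm.

Section OperatorNorm.
Variables (R : realType) (m k : nat) (A : 'M[R]_(m, k)).
Hypothesis A_contraction : forall z, sqnorm (A *m z) <= sqnorm z.

Let unit_ball_image := [set vnorm (A *m x) | x in [set x : 'cV[R]_k | vnorm x <= 1]].

Let unit_ball_image0 : unit_ball_image (vnorm (A *m 0)).
Proof. by exists 0 => //=; rewrite vnorm_le1 sqnorm0. Qed.

Let has_sup_unit_ball_image : has_sup unit_ball_image.
Proof.
split; first by exists (vnorm (A *m 0)).
exists 1 => _ [x /= x_le1 <-].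
by rewrite vnorm_le1 (le_trans (A_contraction x)) // -vnorm_le1.
Qed.

Lemma opnorm_ge0 : 0 <= opnorm A.
Proof.
apply: le_trans (vnorm_ge0 (A *m 0)) _.
exact: sup_upper_bound has_sup_unit_ball_image _ unit_ball_image0.
Qed.

Lemma sqnorm_mulmx_le_opnorm z : sqnorm (A *m z) <= opnorm A ^+ 2 * sqnorm z.
Proof.
have [z0|z_neq0] := eqVneq z 0; first by rewrite z0 mulmx0 !sqnorm0 mulr0.
have nz_gt0 : 0 < vnorm z.
  by rewrite /vnorm sqrtr_gt0 lt0r sqnorm_eq0 z_neq0 sqnorm_ge0.
set u := (vnorm z)^-1 *: z.
have Au_le : vnorm (A *m u) <= opnorm A.
  apply: sup_upper_bound; first exact: has_sup_unit_ball_image.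
  exists u => //=; rewrite vnorm_le1 sqnormZ -sqr_vnorm exprVn mulVf //.
  by rewrite expf_neq0 // gt_eqF.
have : sqnorm (A *m u) <= opnorm A ^+ 2.
  by rewrite -sqr_vnorm lerXn2r // nnegrE ?vnorm_ge0 ?opnorm_ge0.
rewrite /u -scalemxAr sqnormZ exprVn -(sqr_vnorm z) mulrC.
by rewrite ler_pdivrMr ?exprn_gt0.
Qed.

Lemma opnorm_le c : 0 <= c ->
  (forall z, sqnorm (A *m z) <= c ^+ 2 * sqnorm z) -> opnorm A <= c.
Proof.
move=> c_ge0 A_le; apply: ge_sup; first by exists (vnorm (A *m 0)).
move=> _ [x /= x_le1 <-].
rewrite /vnorm -(ger0_norm c_ge0) -sqrtr_sqr ler_sqrt ?sqr_ge0 //.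
apply: le_trans (A_le x) _.
by rewrite ler_piMr ?sqr_ge0 // -vnorm_le1.
Qed.

End OperatorNorm.

Section RestrictedIsometry.
Variable R : realType.

Definition rip_bound (n m s : nat) (Psi : 'M[R]_(n, m)) (d : R) : Prop :=
  forall T : {set 'I_m}, (#|T| <= s)%N -> forall x : 'cV[R]_(#|T|),
    (1 - d) * sqnorm x <= sqnorm ((Psi *m I_T R T) *m x) /\
    sqnorm ((Psi *m I_T R T) *m x) <= (1 + d) * sqnorm x.

Lemma rip_constE n m s (Psi : 'M[R]_(n, m)) :
  rip_const s Psi = inf (rip_bound s Psi).
Proof. by []. Qed.

Lemma rip_bound_ge0 n m s (Psi : 'M[R]_(n, m)) d :
  (0 < m)%N -> (0 < s)%N -> rip_bound s Psi d -> 0 <= d.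
Proof.
case: m Psi => // m Psi _ s_gt0 d_bound.
have T_le_s : (#|[set ord0 : 'I_m.+1]%SET| <= s)%N by rewrite cards1.
have [] := d_bound _ T_le_s (const_mx 1).
have -> : sqnorm (const_mx 1 : 'cV[R]_#|[set ord0 : 'I_m.+1]%SET|) = 1.
  by rewrite sqnorm_const1 cards1.
lra.
Qed.

Lemma rip_bound_dim0 n m s (Psi : 'M[R]_(n, m)) :
  m = 0%N -> rip_bound s Psi = [set: R].
Proof.
move=> m0; subst m; apply/seteqP; split=> // d _ T _ x.
by rewrite thinmx0 !mul0mx sqnorm0 sqnorm_dim0 ?card_set_ord0 // !mulr0.
Qed.

End RestrictedIsometry.

Section Submatrices.
Variables (R : realType) (n : nat) (T : {set 'I_n}).

Lemma trmx_I_T_mul : (I_T R T)^T *m I_T R T = 1%:M.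
Proof.
apply/matrixP => j l; rewrite !mxE (bigD1 (enum_val j)) //= big1 => [|i /negbTE i_neq].
  by rewrite !mxE eqxx mul1r addr0 (inj_eq enum_val_inj).
by rewrite !mxE i_neq mul0r.
Qed.

Lemma sqnorm_trmx_I_T_le (w : 'cV[R]_n) : sqnorm ((I_T R T)^T *m w) <= sqnorm w.
Proof.
rewrite -[sqnorm w]mul1r; apply: sqnorm_trmx_le => // x.
by rewrite mul1r sqnorm_isometry ?trmx_I_T_mul.
Qed.

End Submatrices.

Lemma sqnorm_proj_compl (R : realType) n r (P : 'M[R]_(n, r)) (w : 'cV[R]_n) :
  basis_matrix P -> sqnorm ((1%:M - P *m P^T) *m w) = sqnorm w - sqnorm (P^T *m w).
Proof.
move=> P_basis; rewrite mulmxBl mul1mx -mulmxA sqnormB (sqnorm_isometry (A := P)) //.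
rewrite dotmxC dotmx_mull -sqnormE; lra.
Qed.

Section Denseness.
Variables (R : realType) (n r : nat) (P : 'M[R]_(n, r)).
Hypothesis P_basis : basis_matrix P.
Implicit Types T : {set 'I_n}.

Let Q := 1%:M - P *m P^T.
Let P_ T := (I_T R T)^T *m P.

Lemma sqnorm_proj_compl_I_T T x :
  sqnorm ((Q *m I_T R T) *m x) = sqnorm x - sqnorm ((P_ T)^T *m x).
Proof.
rewrite -mulmxA sqnorm_proj_compl // (sqnorm_isometry (A := I_T R T)) ?trmx_I_T_mul //.
by rewrite /P_ trmx_mul trmxK mulmxA.
Qed.

Lemma sqnorm_I_T_basis_le T z : sqnorm (P_ T *m z) <= sqnorm z.
Proof. by rewrite -mulmxA -(sqnorm_isometry z P_basis) sqnorm_trmx_I_T_le. Qed.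

Lemma opnorm_le_kappa s T : (#|T| <= s)%N -> opnorm (P_ T) <= kappa s P.
Proof. by move=> T_le_s; apply: (le_bigmax_cond _ (fun T => opnorm (P_ T))). Qed.

Lemma kappa_ge0 s : 0 <= kappa s P.
Proof.
apply: le_trans (opnorm_le_kappa (T := finset.set0) _); last by rewrite cards0.
exact: opnorm_ge0 (sqnorm_I_T_basis_le _).
Qed.

Lemma rip_bound_kappa s : rip_bound s Q (kappa s P ^+ 2).
Proof.
move=> T T_le_s x; rewrite sqnorm_proj_compl_I_T.
have opT_le : opnorm (P_ T) ^+ 2 <= kappa s P ^+ 2.
  rewrite lerXn2r ?nnegrE ?opnorm_le_kappa ?kappa_ge0 //.
  exact: opnorm_ge0 (@sqnorm_I_T_basis_le T).
have := sqnorm_trmx_le (sqr_ge0 _) (sqnorm_mulmx_le_opnorm (@sqnorm_I_T_basis_le T)) x.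
have := sqnorm_ge0 ((P_ T)^T *m x); have := sqnorm_ge0 x.
split; nra.
Qed.

Lemma kappa_le_rip_bound s d : 0 <= d -> rip_bound s Q d -> kappa s P ^+ 2 <= d.
Proof.
move=> d_ge0 d_bound.
rewrite -(sqr_sqrtr d_ge0) lerXn2r ?nnegrE ?kappa_ge0 ?sqrtr_ge0 //.
apply: bigmax_le; first exact: sqrtr_ge0.
move=> T T_le_s; apply: opnorm_le; first exact: sqrtr_ge0.
rewrite sqr_sqrtr // => z; rewrite -[X in X *m z]trmxK; apply: sqnorm_trmx_le => // x.
by have [+ _] := d_bound T T_le_s x; rewrite sqnorm_proj_compl_I_T; lra.
Qed.

Lemma kappa_dim0 s : n = 0%N -> kappa s P = 0.
Proof.
move=> n0; apply/le_anti; rewrite kappa_ge0 andbT.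
apply: bigmax_le => // T _; apply: opnorm_le => // z.
by rewrite expr0n mul0r sqnorm_dim0 //; subst n; apply: card_set_ord0.
Qed.

End Denseness.

Theorem lemma4 (R : realType) (n r : nat) (P : 'M[R]_(n, r)) (s : nat) :
  basis_matrix P -> (0 < s)%N ->
  rip_const s (1%:M - P *m P^T) = (kappa s P) ^+ 2.
Proof.
move=> P_basis s_gt0; rewrite rip_constE.
have [n0|n_gt0] := posnP n.
  by rewrite rip_bound_dim0 // inf_setT kappa_dim0 // expr0n.
apply: inf_attained; first exact: rip_bound_kappa.
move=> d d_bound.
exact: kappa_le_rip_bound (rip_bound_ge0 n_gt0 s_gt0 d_bound) d_bound.
Qed.
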